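(* Let $\Gamma$ be a profinite group and let $n\geq 2$ be even. Let $(Z/Z_0,\partial_Z)$ be an oriented $\Gamma$-covering of degree $2$ with $|Z_0|=n$, and for $i=1,2$ put $C_i(Z/Z_0,\partial_Z)=\{\omega\in C(Z/Z_0)\mid \delta(\omega)=\partial_Z(i)\}$. Then $C(Z/Z_0)=C_1(Z/Z_0,\partial_Z)\sqcup C_2(Z/Z_0,\partial_Z)$, each $C_i(Z/Z_0,\partial_Z)$ is a $\Gamma$-stable subset stable under the complementation map $\omega\mapsto Z\setminus\omega$, which is a fixed-point-free involution on it, so that $C_i(Z/Z_0,\partial_Z)$ is a $\Gamma$-covering of degree $2$ of a $\Gamma$-set with $2^{n-2}$ elements (its set of orbits under complementation); these assignments are functorial with respect to isomorphisms of oriented coverings, giving two functors $C_1,C_2$ from the groupoid of oriented degree-$2$ coverings of $n$-element $\Gamma$-sets to the groupoid of degree-$2$ coverings of $2^{n-2}$-element $\Gamma$-sets. Moreover, two sections $\omega,\omega'\in C(Z/Z_0)$ lie in the same set $C_1(Z/Z_0,\partial_Z)$ or $C_2(Z/Z_0,\partial_Z)$ if and only if $|\omega\cap\omega'|\equiv 0\pmod 2$.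
   Context: A (finite) $\Gamma$-set is a finite set with a continuous left action of $\Gamma$. A $\Gamma$-covering of degree $2$ is a $\Gamma$-equivariant map $\pi\colon Z\to Z_0$ of $\Gamma$-sets all of whose fibers have $2$ elements; $\sigma$ denotes the involution of $Z$ swapping the elements of each fiber. $C(Z/Z_0)$ is the $\Gamma$-set of all subsets $\{z_1,\dots,z_n\}\subset Z$ mapping bijectively onto $Z_0$. For a $\Gamma$-set $X$ with $m\ge 2$ elements, $\Delta(X)$ is the two-element $\Gamma$-set of $\mathfrak A_m$-orbits of orderings $(x_1,\dots,x_m)$ of $X$. The map $\delta\colon C(Z/Z_0)\to\Delta(Z)$ sends $\{z_1,\dots,z_n\}$ to the $\mathfrak A_{2n}$-orbit of $(z_1,\dots,z_n,\sigma(z_1),\dots,\sigma(z_n))$. An orientation of $Z$ is an isomorphism of $\Gamma$-sets $\partial_Z\colon\{1,2\}\to\Delta(Z)$, where $\{1,2\}$ has trivial $\Gamma$-action (so $\Gamma$ must act trivially on $\Delta(Z)$); an oriented covering is a pair $(Z/Z_0,\partial_Z)$, and morphisms of oriented coverings are isomorphisms of coverings $f$ compatible with the orientations (i.e. the induced map $\Delta(f)$ carries one orientation to the other). *)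

From HB Require Import structures.
From mathcomp Require Import boolp classical_sets topology.
From mathcomp Require Import all_boot all_fingroup.

Set Implicit Arguments.
Unset Strict Implicit.
Unset Printing Implicit Defensive.

Record profinite_group (T : topologicalType) := ProfiniteGroup {
  gmul : T -> T -> T;
  ginv : T -> T;
  gone : T;
  gmulA : associative gmul;
  gmul1 : left_id gone gmul;
  gmulV : left_inverse gone ginv gmul;
  gmul_cont : continuous (fun p : T * T => gmul p.1 p.2);
  ginv_cont : continuous ginv;
  g_compact : compact [set: T]%classic;
  g_hausdorff : hausdorff_space T;
  g_totdisc : totally_disconnected [set: T]%classic }.

Section Defs.
Variables (T : topologicalType) (G : profinite_group T).

(* [act] restricted to the subset [A] of the finite type [X] is a continuous
   (= open stabilizers, X discrete) left action of the profinite group G. *)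
Definition gaction_on (X : finType) (act : T -> X -> X) (A : {set X}) :=
  [/\ forall g x, x \in A -> act g x \in A,
      forall x, x \in A -> act (gone G) x = x,
      forall g h x, x \in A -> act (gmul G g h) x = act g (act h x) &
      forall x, x \in A -> open [set g : T | act g x = x]%classic].

Definition covering_on (X Y : finType) (actX : T -> X -> X) (A : {set X})
    (actY : T -> Y -> Y) (B : {set Y}) (p : X -> Y) :=
  [/\ gaction_on actX A, gaction_on actY B,
      forall x, x \in A -> p x \in B,
      forall g x, x \in A -> p (actX g x) = actY g (p x) &
      forall y, y \in B -> #|[set x in A | p x == y]| = 2].

End Defs.

Definition act_set (T : Type) (X : finType) (act : T -> X -> X) (g : T)
  (A : {set X}) : {set X} := act g @: A.

Definition ordering (X : finType) : {set {ffun 'I_#|X| -> X}} :=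
  [set o : {ffun 'I_#|X| -> X} | injectiveb o].

Definition orbitA (X : finType) (o : {ffun 'I_#|X| -> X}) :
    {set {ffun 'I_#|X| -> X}} :=
  [set o' : {ffun 'I_#|X| -> X} | [exists s : 'S_#|X|, ~~ odd_perm s && (o' == [ffun i => o (s i)])]].

Definition Delta (X : finType) : {set {set {ffun 'I_#|X| -> X}}} :=
  [set orbitA o | o in ordering X].

Definition act_ord (T : Type) (X : finType) (act : T -> X -> X) (g : T)
  (o : {ffun 'I_#|X| -> X}) : {ffun 'I_#|X| -> X} := [ffun i => act g (o i)].
Definition act_Delta (T : Type) (X : finType) (act : T -> X -> X) (g : T)
  (D : {set {ffun 'I_#|X| -> X}}) := [set act_ord act g o | o in D].

(* An orientation of Z: an isomorphism of Gamma-sets {1,2} -> Delta(Z),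
   where {1,2} is represented by 'I_2 (index 0 <-> 1, index 1 <-> 2) with
   the trivial action. *)
Definition orientation (T : Type) (Z : finType) (act : T -> Z -> Z)
    (d : 'I_2 -> {set {ffun 'I_#|Z| -> Z}}) :=
  [/\ injective d, [set d i | i : 'I_2] = Delta Z &
      forall g i, act_Delta act g (d i) = d i].

Section Covering.
Variables (Z Z0 : finType) (pi : Z -> Z0).

Definition sigma (z : Z) : Z :=
  odflt z [pick z' | (pi z' == pi z) && (z' != z)].

Definition Csec : {set {set Z}} :=
  [set w : {set Z} | [forall z, forall z',
      ((z \in w) && (z' \in w) && (pi z == pi z')) ==> (z == z')]
    && (pi @: w == [set: Z0])].

(* o is an ordering of the form (z_1,..,z_n, sigma z_1, .., sigma z_n)
   with {z_1,..,z_n} = w, n = #|Z0|. *)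
Definition doubled (w : {set Z}) (o : {ffun 'I_#|Z| -> Z}) : bool :=
  [forall i : 'I_#|Z|, (val i < #|Z0|) ==> (o i \in w)] &&
  [forall i : 'I_#|Z|, forall j : 'I_#|Z|,
      (val j == val i + #|Z0|) ==> (o j == sigma (o i))].

Definition delta (w : {set Z}) : {set {ffun 'I_#|Z| -> Z}} :=
  if [pick o in ordering Z | doubled w o] is Some o then orbitA o else set0.

Definition Ci (d : 'I_2 -> {set {ffun 'I_#|Z| -> Z}}) (i : 'I_2) :
    {set {set Z}} :=
  [set w in Csec | delta w == d i].

Definition Qi (d : 'I_2 -> {set {ffun 'I_#|Z| -> Z}}) (i : 'I_2) :
    {set {set {set Z}}} :=
  [set [set w; ~: w] | w in Ci d i].

End Covering.

Definition oriented_iso (T : Type) (Z Z0 Z' Z0' : finType)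
    (actZ : T -> Z -> Z) (actZ0 : T -> Z0 -> Z0) (pi : Z -> Z0)
    (d : 'I_2 -> {set {ffun 'I_#|Z| -> Z}})
    (actZ' : T -> Z' -> Z') (actZ0' : T -> Z0' -> Z0') (pi' : Z' -> Z0')
    (d' : 'I_2 -> {set {ffun 'I_#|Z'| -> Z'}})
    (f : Z -> Z') (f0 : Z0 -> Z0') :=
  [/\ bijective f, bijective f0,
      forall z, pi' (f z) = f0 (pi z),
      (forall g z, f (actZ g z) = actZ' g (f z)) /\
      (forall g z0, f0 (actZ0 g z0) = actZ0' g (f0 z0)) &
      (* Delta(f) carries d to d' *)
      forall i o, o \in d i -> exists2 o', o' \in d' i &
        forall (j : 'I_#|Z|) (j' : 'I_#|Z'|), val j = val j' -> o' j' = f (o j)].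

From Pilot Require Import Defs.
From mathcomp Require Import boolp classical_sets topology.
From mathcomp Require Import all_boot all_fingroup.
From mathcomp Require Import zify.

Set Implicit Arguments.
Unset Strict Implicit.
Unset Printing Implicit Defensive.

(* A section w of Z -> Z0 can be listed as an ordering (z_1, .., z_n,
   sigma z_1, .., sigma z_n) of Z with w = {z_1, .., z_n}.  Two such listings
   differ by a permutation of the z_i applied to both halves at once, which is
   even, so delta w is the A_2n-orbit of any of them.  Moving a single fibre
   (replacing some z_i by sigma z_i) is a transposition and changes delta;
   hence delta w = delta w' exactly when |w \ w'| is even, and for n even this
   is the parity of |w :&: w'|.  So complementation, which moves all n fibres,
   preserves each class, while moving one fixed fibre exchanges the two classes:
   each has 2^(n-1) elements, forming 2^(n-2) complementary pairs.
   Equivariance and functoriality follow by transporting the listings along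
   equivariant bijections. *)

Lemma eq_two_valued (T : finType) (d0 d1 a b c : T) :
  a \in [set d0; d1] -> b \in [set d0; d1] -> c \in [set d0; d1] -> b != c ->
  (a == b) = (a != c).
Proof. by do 3!case/set2P=> ->; rewrite ?eqxx // eq_sym => /negbTE ->. Qed.

Lemma imsetC_bij (A B : finType) (h : A -> B) (S : {set A}) :
  bijective h -> h @: (~: S) = ~: (h @: S).
Proof. by case=> h_inv hK h_invK; rewrite !(can2_imset_pre _ hK h_invK) preimsetC. Qed.

Lemma setC_neq (T : finType) (x : T) (A : {set T}) : ~: A != A.
Proof. by apply/eqP => /setP/(_ x); rewrite inE; case: (x \in A). Qed.

Lemma odd_setD_setI (T : finType) (A B : {set T}) :
  ~~ odd #|A| -> odd #|A :\: B| = odd #|A :&: B|.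
Proof. by rewrite -(cardsID B A) oddD => /negbTE; case: odd; case: odd. Qed.

Section InvolutionPairs.
Variables (U : finType) (c : U -> U).
Hypotheses (cK : involutive c) (c_neq : forall x, c x != x).

Lemma involution_pair_eq x u : u \in [set x; c x] -> [set x; c x] = [set u; c u].
Proof. by case/set2P => ->; rewrite ?cK // setUC. Qed.

Lemma card_involution_pairs (A : {set U}) : (forall x, x \in A -> c x \in A) ->
  #|A| = 2 * #|[set [set x; c x] | x in A]|.
Proof.
move=> cA; set P := [set [set x; c x] | x in A].
have P_part : partition P A.
  apply/and3P; split.
  - apply/eqP/setP => u; apply/bigcupP/idP => [[_ /imsetP[x xA ->] /set2P[]->]|uA].
      + exact: xA.
      + exact: cA.
    by exists [set u; c u]; [apply: imset_f | rewrite !inE eqxx].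
  - apply/trivIsetP => _ _ /imsetP[x _ ->] /imsetP[y _ ->] pxy.
    rewrite -setI_eq0; apply: contraTT pxy => /set0Pn[u /setIP[ux uy]].
    by rewrite negbK (involution_pair_eq ux) (involution_pair_eq uy).
  - by apply/imsetP => -[x _ /setP/(_ x)]; rewrite !inE eqxx.
rewrite (card_partition P_part) (eq_bigr (fun _ => 2)).
  by rewrite sum_nat_const mulnC.
by move=> _ /imsetP[x _ ->]; rewrite cards2 eq_sym c_neq.
Qed.

End InvolutionPairs.

Section ContinuousAction.
Variables (T : topologicalType) (G : profinite_group T).

Lemma continuous_gmull (c : T) : continuous (gmul G c).
Proof.
move=> y; have pair_cont : {for y, continuous (fun y : T => (c, y))}.
  by apply: cvg_pair; [exact: cvg_cst | exact: cvg_id].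
exact: continuous_comp pair_cont (@gmul_cont _ G (c, y)).
Qed.

Lemma gaction_inj (X : finType) (act : T -> X -> X) (A : {set X}) g :
  gaction_on G act A -> {in A &, injective (act g)}.
Proof.
case=> _ act1 actM _ x y xA yA E.
by rewrite -(act1 x xA) -(act1 y yA) -(gmulV G g) !actM // E.
Qed.

(* Around each of its points g, such a P contains g times the intersection of
   the finitely many (open) stabilizers. *)
Lemma open_act_invariant (X : finType) (act : T -> X -> X) (P : set T) :
  gaction_on G act [set: X] -> (forall g h, act g =1 act h -> P g -> P h) ->
  open P.
Proof.
move=> actG P_inv; rewrite openE => g Pg; rewrite /interior.
have [_ act1 actM stab_open] := actG.
have near_act z : \forall x \near g, act x z = act g z.
  have stab_nbhs : nbhs (gmul G (ginv G g) g) [set x | act x z = z]%classic.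
    by rewrite gmulV; apply: open_nbhs_nbhs; split; [exact: stab_open | exact: act1].
  apply: (@filterS _ _ _ (gmul G (ginv G g) @^-1` [set x | act x z = z])%classic);
    last exact: continuous_gmull stab_nbhs.
  move=> x /= Ex.
  apply: (gaction_inj (g := ginv G g) actG (in_setT _) (in_setT _)).
  by rewrite -!actM ?inE // Ex gmulV act1 ?inE.
apply: filterS (filter_forall (f := fun z x => act x z = act g z) _ near_act).
move=> x /= Ex.
by apply: (P_inv g) => // z; rewrite Ex.
Qed.

Lemma gaction_act_set (X : finType) (act : T -> X -> X) (A : {set {set X}}) :
  gaction_on G act [set: X] ->
  (forall g B, B \in A -> act_set act g B \in A) ->
  gaction_on G (act_set act) A.
Proof.
move=> actG A_stable; have [_ act1 actM _] := actG.
split=> // [B _|g h B _|B _].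
- by rewrite /act_set (eq_imset _ (g := id)) ?imset_id // => x; rewrite act1.
- by rewrite /act_set -imset_comp; apply: eq_imset => x /=; rewrite actM.
apply: (open_act_invariant actG) => g h act_gh /= act_gB.
by rewrite -[RHS]act_gB; apply: eq_imset => x; rewrite act_gh.
Qed.

End ContinuousAction.

Section EvenReorderings.
Variable X : finType.
Local Notation ordT := {ffun 'I_#|X| -> X}.
Implicit Types (o : ordT) (s t : 'S_#|X|).

Definition reorder o s : ordT := [ffun i => o (s i)].

Lemma reorderM o s t : reorder (reorder o s) t = reorder o (t * s).
Proof. by apply/ffunP => i; rewrite !ffunE permM. Qed.

Lemma orbitAP o o' :
  reflect (exists2 s, ~~ odd_perm s & o' = reorder o s) (o' \in orbitA o).
Proof.
rewrite inE; apply: (iffP existsP) => [[s /andP[s_even /eqP ->]]|[s s_even ->]].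
  by exists s.
by exists s; rewrite s_even eqxx.
Qed.

Lemma orbitA_refl o : o \in orbitA o.
Proof.
apply/orbitAP; exists 1%g; rewrite ?odd_perm1 //.
by apply/ffunP => i; rewrite ffunE perm1.
Qed.

Lemma orbitA_reorder_even o s : ~~ odd_perm s -> orbitA (reorder o s) = orbitA o.
Proof.
move=> s_even; apply/setP => o'; apply/orbitAP/orbitAP => [[t t_even ->]|[t t_even ->]].
  by exists (t * s)%g; rewrite ?reorderM // odd_permM (negbTE t_even) (negbTE s_even).
exists (t * s^-1)%g; last by rewrite reorderM -mulgA mulVg mulg1.
by rewrite odd_permM odd_permV (negbTE t_even) (negbTE s_even).
Qed.

Lemma orbitA_eq o o' : o' \in orbitA o -> orbitA o' = orbitA o.
Proof. by case/orbitAP => s s_even ->; exact: orbitA_reorder_even. Qed.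

Lemma orbitA_reorder_odd o s :
  injective o -> odd_perm s -> orbitA (reorder o s) != orbitA o.
Proof.
move=> o_inj s_odd; apply/eqP => os_o.
have /orbitAP[t t_even os_ot] : reorder o s \in orbitA o by rewrite -os_o orbitA_refl.
suff s_t : s = t by rewrite -s_t s_odd in t_even.
apply/permP => i; apply: o_inj.
by have := congr1 (fun o' : ordT => o' i) os_ot; rewrite !ffunE.
Qed.

Lemma Delta_orbitA D o : D \in Delta X -> o \in D -> D = orbitA o.
Proof. by case/imsetP => o' _ -> /orbitA_eq ->. Qed.

Lemma ordering_bij o : o \in ordering X -> bijective o.
Proof. by rewrite inE => /injectiveP o_inj; apply: inj_card_bij; rewrite ?card_ord. Qed.

Lemma reorder_ordering o s : o \in ordering X -> reorder o s \in ordering X.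
Proof.
rewrite !inE => /injectiveP o_inj; apply/injectiveP => i j.
by rewrite !ffunE => /o_inj/perm_inj.
Qed.

Lemma ordering_reorder o o' :
  o \in ordering X -> o' \in ordering X -> exists s, o' = reorder o s.
Proof.
move=> /ordering_bij[o_inv oK o_invK]; rewrite inE => /injectiveP o'_inj.
have o_inv_o'_inj : injective (o_inv \o o') := inj_comp (can_inj o_invK) o'_inj.
by exists (perm o_inv_o'_inj); apply/ffunP => i; rewrite !ffunE permE /= o_invK.
Qed.

End EvenReorderings.

Section HalfTurn.
Variables (N m : nat).
Hypothesis m_double : m = N + N.

Definition half_turn (i : 'I_m) : 'I_m :=
  insubd i (if i < N then i + N else i - N).

Lemma val_half_turn (i : 'I_m) :
  val (half_turn i) = if i < N then i + N else i - N.
Proof.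
rewrite val_insubd; have := ltn_ord i.
by case: (ltnP i N) => iN im; rewrite ifT //; lia.
Qed.

Lemma val_half_turn_low (i : 'I_m) : i < N -> val (half_turn i) = i + N.
Proof. by rewrite val_half_turn => ->. Qed.

Lemma val_half_turn_high (i : 'I_m) : N <= i -> val (half_turn i) = i - N.
Proof. by rewrite val_half_turn ltnNge => ->. Qed.

Lemma half_turn_low (i : 'I_m) : (half_turn i < N) = (N <= i).
Proof.
have := ltn_ord i; case: (ltnP i N) => iN im.
  by rewrite val_half_turn_low //; lia.
by rewrite val_half_turn_high //; lia.
Qed.

Lemma half_turnK : involutive half_turn.
Proof.
move=> i; apply: val_inj => /=; case: (ltnP i N) => iN.
  have Ni : N <= half_turn i by rewrite leqNgt half_turn_low -ltnNge.
  by rewrite val_half_turn_high // val_half_turn_low // addnK.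
have iN' : half_turn i < N by rewrite half_turn_low.
by rewrite val_half_turn_low // val_half_turn_high // subnK.
Qed.

(* A permutation preserving the lower half and commuting with the half turn
   is p * p ^ half_turn for its restriction p to the lower half. *)
Lemma half_turn_commuting_even (s : 'S_m) :
  (forall i : 'I_m, i < N -> s i < N) ->
  (forall i, s (half_turn i) = half_turn (s i)) ->
  ~~ odd_perm s.
Proof.
move=> s_low sC.
pose p_fun (i : 'I_m) := if i < N then s i else i.
have p_inj : injective p_fun.
  rewrite /p_fun => i j; case: (ltnP i N) => iN; case: (ltnP j N) => jN.
  - exact: perm_inj.
  - by move=> sij; have := s_low _ iN; rewrite sij ltnNge jN.
  - by move=> sij; have := s_low _ jN; rewrite -sij ltnNge iN.
  - done.
pose p : 'S_m := perm p_inj; pose h : 'S_m := perm (can_inj half_turnK).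
have pE i : p i = p_fun i by rewrite permE.
have hE i : h i = half_turn i by rewrite permE.
have pJ i : (p ^ h)%g i = half_turn (p (half_turn i)).
  by rewrite -{1}[i]half_turnK -hE permJ hE.
suff -> : s = (p * p ^ h)%g by rewrite odd_permM odd_permJ addbb.
apply/permP => i; rewrite permM pJ !pE /p_fun; case: (ltnP i N) => iN.
  have : ~~ (half_turn (s i) < N) by rewrite half_turn_low -ltnNge s_low.
  by move/negbTE => ->; rewrite half_turnK.
by rewrite half_turn_low iN -sC half_turnK.
Qed.

End HalfTurn.

Section DoubleCover.
Variables (Z Z0 : finType) (pi : Z -> Z0).
Hypothesis pi_fibre2 : forall y, #|[set x | pi x == y]| = 2.

Local Notation sigma := (sigma pi).
Local Notation Csec := (Csec pi).
Local Notation delta := (delta pi).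
Implicit Types (w : {set Z}) (z : Z).

Lemma sigma_pi_neq z : pi (sigma z) = pi z /\ sigma z != z.
Proof.
rewrite /sigma; case: pickP => [z' /andP[/eqP -> ->] //|no_other].
have : [set x | pi x == pi z] \subset [set z].
  apply/subsetP => x; rewrite !inE => pi_xz.
  by move: (no_other x); rewrite pi_xz /= => /negbT; rewrite negbK.
by move/subset_leq_card; rewrite cards1 pi_fibre2.
Qed.

Lemma sigma_pi z : pi (sigma z) = pi z. Proof. by case: (sigma_pi_neq z). Qed.
Lemma sigma_neq z : sigma z != z. Proof. by case: (sigma_pi_neq z). Qed.

Lemma fibreE z : [set x | pi x == pi z] = [set z; sigma z].
Proof.
apply/eqP; rewrite eq_sym eqEcard pi_fibre2 cards2 eq_sym sigma_neq andbT.
by apply/subsetP => x /set2P[] ->; rewrite inE ?sigma_pi.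
Qed.

Lemma sigma_fibre z z' : pi z' = pi z -> z' = z \/ z' = sigma z.
Proof.
move=> pi_z'z; have : z' \in [set x | pi x == pi z] by rewrite inE pi_z'z.
by rewrite fibreE => /set2P.
Qed.

Lemma sigmaK : involutive sigma.
Proof.
move=> z; have : pi (sigma (sigma z)) = pi z by rewrite !sigma_pi.
by case/sigma_fibre => // sigma2; have := sigma_neq (sigma z); rewrite sigma2 eqxx.
Qed.

Lemma pi_surj y : exists z, pi z = y.
Proof.
have : 0 < #|[set x | pi x == y]| by rewrite pi_fibre2.
by case/card_gt0P => z; rewrite inE => /eqP; exists z.
Qed.

Lemma CsecP w : reflect (forall z, (sigma z \in w) = (z \notin w)) (w \in Csec).
Proof.
rewrite inE; apply: (iffP andP) => [[/forallP w_inj /eqP w_onto] z|w_sigma].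
  have [zw|zNw] := boolP (z \in w).
    apply/negP => sz_w; have := sigma_neq z; move: (w_inj (sigma z)).
    by move=> /forallP/(_ z); rewrite sz_w zw sigma_pi eqxx => /eqP ->; rewrite eqxx.
  have : pi z \in pi @: w by rewrite w_onto inE.
  case/imsetP => z' z'w /esym/sigma_fibre[z'z|z'_sz].
    by rewrite -z'z z'w in zNw.
  by rewrite -z'_sz z'w.
split.
  apply/forallP => z; apply/forallP => z'.
  apply/implyP => /andP[/andP[zw z'w] /eqP pi_zz'].
  case: (sigma_fibre (esym pi_zz')) => [->//|z'_sz].
  by move: z'w; rewrite z'_sz w_sigma zw.
apply/eqP/setP => y; rewrite inE; have [z <-] := pi_surj y.
have [zw|zNw] := boolP (z \in w); first exact: imset_f.
by rewrite -sigma_pi imset_f // w_sigma.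
Qed.

Lemma Csec_sigma w z : w \in Csec -> (sigma z \in w) = (z \notin w).
Proof. by move/CsecP. Qed.

Lemma Csec_pi_inj w : w \in Csec -> {in w &, injective pi}.
Proof.
move=> w_sec z z' zw z'w pi_zz'; case: (sigma_fibre (esym pi_zz')) => [->//|z'_sz].
by move: z'w; rewrite z'_sz (Csec_sigma _ w_sec) zw.
Qed.

Lemma card_Csec_elem w : w \in Csec -> #|w| = #|Z0|.
Proof.
move=> w_sec; rewrite -(card_in_imset (Csec_pi_inj w_sec)) -cardsT.
by move: w_sec; rewrite inE => /andP[_ /eqP ->].
Qed.

Lemma Csec_xor w (P : pred Z0) :
  w \in Csec -> [set x | (x \in w) (+) P (pi x)] \in Csec.
Proof.
move/CsecP => w_sigma; apply/CsecP => z; rewrite !inE sigma_pi w_sigma.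
by case: (z \in w); case: (P (pi z)).
Qed.

Lemma Csec_setC w : w \in Csec -> ~: w \in Csec.
Proof.
move=> w_sec; suff -> : ~: w = [set x | (x \in w) (+) predT (pi x)] by exact: Csec_xor.
by apply/setP => z; rewrite !inE addbT.
Qed.

Lemma exists_Csec : exists w, w \in Csec.
Proof.
exists [set x | x == odflt x [pick x' | pi x' == pi x]]; apply/CsecP => z.
rewrite !inE sigma_pi; case: pickP => [z' /eqP pi_z'z | /(_ z)]; last by rewrite eqxx.
case: (sigma_fibre pi_z'z) => -> /=; first by rewrite eqxx (negbTE (sigma_neq z)).
by rewrite eqxx eq_sym sigma_neq.
Qed.

Lemma card_Z : #|Z| = #|Z0| + #|Z0|.
Proof.
have [w w_sec] := exists_Csec.
by rewrite -(cardsC w) card_Csec_elem // card_Csec_elem // Csec_setC.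
Qed.

Lemma card_Csec : #|Csec| = 2 ^ #|Z0|.
Proof.
have [w0 w0_sec] := exists_Csec.
pose twist (S : {set Z0}) := [set x | (x \in w0) (+) (pi x \in S)].
have twist_inj : injective twist.
  move=> S S' /setP twistSS'; apply/setP => y; have [z <-] := pi_surj y.
  by have := twistSS' z; rewrite !inE => /addbI.
suff -> : Csec = twist @: powerset [set: Z0].
  by rewrite card_imset // card_powerset cardsT.
apply/setP => w; apply/idP/imsetP => [w_sec|[S _ ->]]; last exact: Csec_xor.
exists (pi @: (w :\: w0)); first by rewrite powersetE subsetT.
apply/setP => x; rewrite inE.
suff -> : (pi x \in pi @: (w :\: w0)) = (x \in w) (+) (x \in w0).
  by case: (x \in w); case: (x \in w0).
apply/imsetP/idP => [[x' /setDP[x'w x'Nw0] pi_xx']|].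
  case: (sigma_fibre (esym pi_xx')) => [<-|x'_sx]; first by rewrite x'w (negbTE x'Nw0).
  move: x'w x'Nw0; rewrite x'_sx (Csec_sigma _ w_sec) (Csec_sigma _ w0_sec).
  by move=> /negbTE -> /negbNE ->.
have [xw|xNw] := boolP (x \in w) => /= x_w0.
  by exists x; rewrite // inE xw (negbTE x_w0).
exists (sigma x); rewrite ?sigma_pi // inE.
by rewrite (Csec_sigma _ w_sec) (Csec_sigma _ w0_sec) xNw x_w0.
Qed.

Local Notation half_turn := (@half_turn #|Z0| #|Z|).
Local Notation ordT := {ffun 'I_#|Z| -> Z}.
Implicit Types (o : ordT).

Lemma ltn_card_Z k : (k + #|Z0| < #|Z|) = (k < #|Z0|).
Proof. by rewrite card_Z ltn_add2r. Qed.

Lemma doubledP w o :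
  reflect ((forall i : 'I_#|Z|, i < #|Z0| -> o i \in w) /\
           (forall i, o (half_turn i) = sigma (o i)))
          (doubled pi w o).
Proof.
apply: (iffP andP) => [[/forallP o_low /forallP o_high]|[o_low o_high]]; split.
- by move=> i iN; have := o_low i; rewrite iN.
- suff o_ht (i : 'I_#|Z|) : i < #|Z0| -> o (half_turn i) = sigma (o i).
    move=> i; case: (ltnP i #|Z0|) => [/o_ht //|Ni].
    have hiN : half_turn i < #|Z0| by rewrite (half_turn_low card_Z).
    by rewrite -{2}(half_turnK card_Z i) (o_ht _ hiN) sigmaK.
  move=> iN; have /forallP/(_ (half_turn i)) := o_high i.
  by rewrite (val_half_turn_low card_Z) // eqxx => /eqP.
- by apply/forallP => i; apply/implyP; apply: o_low.
apply/forallP => i; apply/forallP => j; apply/implyP => /eqP /= j_iN.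
have iN : i < #|Z0| by rewrite -ltn_card_Z -j_iN.
suff -> : j = half_turn i by rewrite o_high.
by apply: val_inj; rewrite (val_half_turn_low card_Z).
Qed.

Lemma doubled_low w o j :
  w \in Csec -> doubled pi w o -> o j \in w -> j < #|Z0|.
Proof.
move=> w_sec /doubledP[o_low o_high]; apply: contraTT; rewrite -leqNgt => Nj.
rewrite -(half_turnK card_Z j) o_high (Csec_sigma _ w_sec) ?negbK //.
by apply: o_low; rewrite (half_turn_low card_Z).
Qed.

Lemma doubled_exists w :
  w \in Csec -> exists2 o, o \in ordering Z & doubled pi w o.
Proof.
move=> w_sec; set e := enum w.
have size_e : size e = #|Z0| by rewrite -cardE card_Csec_elem.
(* any default value does, since [nth] is only used below [size e] *)
pose o := [ffun i : 'I_#|Z| => if i < #|Z0| then nth (enum_val i) e i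
                                 else sigma (nth (enum_val i) e (i - #|Z0|))].
have e_w k z0 : k < #|Z0| -> nth z0 e k \in w.
  by move=> kN; rewrite -mem_enum -/e mem_nth // size_e.
have sub_low (i : 'I_#|Z|) : i - #|Z0| < #|Z0|.
  by case: (ltnP i #|Z0|) => iN; [lia | rewrite -ltn_card_Z subnK].
have e_inj k l z0 z1 :
    k < #|Z0| -> l < #|Z0| -> nth z0 e k = nth z1 e l -> k = l.
  move=> kN lN; rewrite (set_nth_default z1) ?size_e // => /eqP.
  by rewrite nth_uniq ?size_e ?enum_uniq // => /eqP.
exists o.
  rewrite inE; apply/injectiveP => i j; rewrite !ffunE.
  case: (ltnP i #|Z0|) => iN; case: (ltnP j #|Z0|) => jN.
  - by move/e_inj => ij; apply: val_inj; apply: ij.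
  - by move=> eij; have := e_w _ (enum_val i) iN; rewrite eij (Csec_sigma _ w_sec) e_w.
  - by move=> eij; have := e_w _ (enum_val j) jN; rewrite -eij (Csec_sigma _ w_sec) e_w.
  move/(can_inj sigmaK)/e_inj => ij; apply: val_inj => /=.
  by rewrite -(subnK iN) -(subnK jN) (ij (sub_low i) (sub_low j)).
apply/doubledP; split=> [i iN|i]; first by rewrite ffunE iN e_w.
rewrite !ffunE (half_turn_low card_Z); case: (ltnP i #|Z0|) => iN.
  rewrite (val_half_turn_low card_Z) // addnK.
  by rewrite (set_nth_default (enum_val i)) ?size_e.
rewrite sigmaK (val_half_turn_high card_Z) //.
by rewrite (set_nth_default (enum_val i)) ?size_e ?sub_low.
Qed.

Lemma doubled_orbitA w o o' : w \in Csec ->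
  o \in ordering Z -> doubled pi w o -> o' \in ordering Z -> doubled pi w o' ->
  orbitA o' = orbitA o.
Proof.
move=> w_sec o_ord o_dbl o'_ord; have [s ->] := ordering_reorder o_ord o'_ord.
case/doubledP => os_low os_high; have [_ o_high] := doubledP _ _ o_dbl.
apply/orbitA_reorder_even/(half_turn_commuting_even card_Z) => [i iN|i].
  by apply: (doubled_low w_sec o_dbl); have := os_low i iN; rewrite ffunE.
apply: (bij_inj (ordering_bij o_ord)); rewrite o_high.
by have := os_high i; rewrite !ffunE.
Qed.

Lemma delta_doubled w o :
  w \in Csec -> o \in ordering Z -> doubled pi w o -> delta w = orbitA o.
Proof.
move=> w_sec o_ord o_dbl; rewrite /Defs.delta.
case: pickP => [o' /andP[o'_ord o'_dbl]|/(_ o)]; last by rewrite o_ord o_dbl.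
exact: (doubled_orbitA w_sec o_ord o_dbl o'_ord o'_dbl).
Qed.

Lemma delta_in_Delta w : w \in Csec -> delta w \in Delta Z.
Proof.
move=> w_sec; have [o o_ord o_dbl] := doubled_exists w_sec.
by rewrite (delta_doubled w_sec o_ord o_dbl) imset_f.
Qed.

Definition flip_fibre w y : {set Z} := [set x | (x \in w) (+) (pi x == y)].

Lemma Csec_flip_fibre w y : w \in Csec -> flip_fibre w y \in Csec.
Proof. exact: (Csec_xor (pred1 y)). Qed.

Lemma flip_fibreK y : involutive (flip_fibre^~ y).
Proof. by move=> w; apply/setP => x; rewrite !inE addbK. Qed.

Lemma doubled_flip_fibre w o (i : 'I_#|Z|) : w \in Csec ->
  o \in ordering Z -> doubled pi w o -> i < #|Z0| ->
  doubled pi (flip_fibre w (pi (o i))) (reorder o (tperm i (half_turn i))).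
Proof.
move=> w_sec o_ord /doubledP[o_low o_high] iN; set t := tperm i (half_turn i).
have tC k : t (half_turn k) = half_turn (t k).
  rewrite [RHS](inj_tperm _ _ _ (can_inj (half_turnK card_Z))).
  by rewrite (half_turnK card_Z) tpermC.
apply/doubledP; split=> [k kN|k]; last by rewrite !ffunE tC o_high.
rewrite !ffunE inE; have [->|ki] := eqVneq k i.
  by rewrite /t tpermL o_high sigma_pi eqxx (Csec_sigma _ w_sec) o_low.
have i_ht_k : half_turn i != k.
  by apply: contraTneq kN => <-; rewrite (half_turn_low card_Z) -ltnNge.
rewrite /t (tpermD _ i_ht_k) 1?eq_sym // o_low //=.
apply/negP => /eqP pi_ki; move/eqP: ki; apply.
exact/(bij_inj (ordering_bij o_ord))/(Csec_pi_inj w_sec (o_low _ kN) (o_low _ iN)).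
Qed.

Lemma delta_flip_fibre w y : w \in Csec -> delta (flip_fibre w y) != delta w.
Proof.
move=> w_sec; have [o o_ord o_dbl] := doubled_exists w_sec.
have [z <-] := pi_surj y.
have [u uw pi_uz] : exists2 u, u \in w & pi u = pi z.
  have [zw|zNw] := boolP (z \in w); first by exists z.
  by exists (sigma z); rewrite ?sigma_pi // Csec_sigma.
have [o_inv _ o_invK] := ordering_bij o_ord; set i := o_inv u.
have oi : o i = u by rewrite o_invK.
have iN : i < #|Z0| by apply: (doubled_low w_sec o_dbl); rewrite oi.
rewrite -pi_uz -oi (delta_doubled w_sec o_ord o_dbl).
rewrite (delta_doubled (Csec_flip_fibre _ w_sec) (reorder_ordering _ o_ord)
           (doubled_flip_fibre w_sec o_ord o_dbl iN)).
apply: orbitA_reorder_odd; first exact: bij_inj (ordering_bij o_ord).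
have hiN : ~~ (half_turn i < #|Z0|) by rewrite (half_turn_low card_Z) -ltnNge.
by rewrite odd_tperm; apply: contraNneq hiN => <-.
Qed.

Lemma setD_flip_fibre w w' z : w \in Csec -> z \in w :\: w' ->
  w :\: flip_fibre w' (pi z) = (w :\: w') :\ z.
Proof.
move=> w_sec /setDP[zw zNw']; apply/setP => x; rewrite !inE.
have [/sigma_fibre[->|->]|pi_xz] := eqVneq (pi x) (pi z).
- by rewrite eqxx zw (negbTE zNw').
- by rewrite (Csec_sigma _ w_sec) zw !andbF.
have -> : x != z by apply: contra_neq pi_xz => ->.
by rewrite addbF.
Qed.

Lemma delta_eq_parity (d0 d1 : {set ordT}) w w' : Delta Z \subset [set d0; d1] ->
  w \in Csec -> w' \in Csec -> (delta w == delta w') = ~~ odd #|w :\: w'|.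
Proof.
move=> Delta2; move card_ww' : #|w :\: w'| => k.
elim: k w' card_ww' => [|k IHk] w' card_ww' w_sec w'_sec.
  suff -> : w = w' by rewrite eqxx.
  apply/eqP; rewrite eqEcard !card_Csec_elem // leqnn andbT.
  by rewrite -setD_eq0 -cards_eq0 card_ww'.
have [z zww'] : exists z, z \in w :\: w'.
  by apply/set0Pn; rewrite -cards_eq0 card_ww'.
have flip_sec := Csec_flip_fibre (pi z) w'_sec.
have card_flip : #|w :\: flip_fibre w' (pi z)| = k.
  by rewrite setD_flip_fibre //; move: card_ww'; rewrite (cardsD1 z) zww' => -[].
rewrite oddS -(IHk _ card_flip w_sec flip_sec).
rewrite (@eq_two_valued _ d0 d1 _ _ (delta (flip_fibre w' (pi z)))) //.
- exact: subsetP Delta2 _ (delta_in_Delta w_sec).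
- exact: subsetP Delta2 _ (delta_in_Delta w'_sec).
- exact: subsetP Delta2 _ (delta_in_Delta flip_sec).
by rewrite eq_sym delta_flip_fibre.
Qed.

Lemma card_delta_class (d0 d1 : {set ordT}) (y0 : Z0) :
  d0 != d1 -> Delta Z \subset [set d0; d1] ->
  2 * #|[set w in Csec | delta w == d0]| = 2 ^ #|Z0|.
Proof.
move=> d01 Delta2; set C := fun d => [set w in Csec | delta w == d].
have inC d w : (w \in C d) = (w \in Csec) && (delta w == d) by rewrite [LHS]in_set.
have delta2 w : w \in Csec -> (delta w == d0) || (delta w == d1).
  by move=> w_sec; rewrite -in_set2 (subsetP Delta2) ?delta_in_Delta.
have flip_other w : w \in Csec ->
    (delta (flip_fibre w y0) == d0) = (delta w == d1).
  move=> w_sec; have := delta_flip_fibre y0 w_sec.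
  have := delta2 _ (Csec_flip_fibre y0 w_sec); have := delta2 _ w_sec.
  by do 2!case/orP=> /eqP->; rewrite ?eqxx // eq_sym ?(negbTE d01).
have C0E : C d0 = flip_fibre^~ y0 @: C d1.
  apply/setP => w; rewrite inE; apply/andP/imsetP => [[w_sec w_d0]|[w' w'C ->]].
    exists (flip_fibre w y0); rewrite ?flip_fibreK // inE Csec_flip_fibre //=.
    by rewrite -flip_other ?Csec_flip_fibre // flip_fibreK.
  move: w'C; rewrite inE => /andP[w'_sec w'_d1].
  by rewrite Csec_flip_fibre // flip_other.
rewrite -card_Csec mul2n -addnn -/(C d0) {1}C0E.
rewrite card_imset; last exact: can_inj (flip_fibreK y0).
rewrite -(cardsID (C d1) Csec); congr (_ + _); apply: eq_card => w.
  by rewrite in_setI !inC andbA andbb.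
rewrite in_setD !inC; have [w_sec|] //= := boolP (w \in Csec).
by case/orP: (delta2 w w_sec) => /eqP->; rewrite !eqxx andbT ?d01 // eq_sym (negbTE d01).
Qed.

End DoubleCover.

Section Transport.
Variables (Z Z0 Z' Z0' : finType) (pi : Z -> Z0) (pi' : Z' -> Z0').
Hypothesis pi_fibre2 : forall y, #|[set x | pi x == y]| = 2.
Hypothesis pi'_fibre2 : forall y, #|[set x | pi' x == y]| = 2.
Variables (h : Z -> Z') (h0 : Z0 -> Z0').
Hypotheses (h_bij : bijective h) (h_pi : forall z, pi' (h z) = h0 (pi z)).

Let h_inj : injective h := bij_inj h_bij.

Lemma sigma_transport z : sigma pi' (h z) = h (sigma pi z).
Proof.
have : pi' (h (sigma pi z)) = pi' (h z) by rewrite !h_pi sigma_pi.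
case/(sigma_fibre pi'_fibre2) => [/h_inj/eqP|->//].
by rewrite (negbTE (sigma_neq pi_fibre2 z)).
Qed.

Lemma Csec_transport w : w \in Csec pi -> h @: w \in Csec pi'.
Proof.
move/(CsecP pi_fibre2) => w_sigma; apply/(CsecP pi'_fibre2) => z'.
have [h_inv hK h_invK] := h_bij; rewrite -(h_invK z').
by rewrite sigma_transport !(mem_imset _ _ h_inj) w_sigma.
Qed.

Lemma card_transport : #|Z'| = #|Z|.
Proof. exact: esym (bij_eq_card h_bij). Qed.

Lemma card_base_transport : #|Z0'| = #|Z0|.
Proof.
have := card_transport; rewrite (card_Z pi'_fibre2) (card_Z pi_fibre2) !addnn.
exact: (can_inj doubleK).
Qed.

Lemma doubled_transport w o (o' : {ffun 'I_#|Z'| -> Z'}) :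
  o \in ordering Z -> doubled pi w o ->
  (forall (j : 'I_#|Z|) (j' : 'I_#|Z'|), val j = val j' -> o' j' = h (o j)) ->
  o' \in ordering Z' /\ doubled pi' (h @: w) o'.
Proof.
move=> o_ord /(doubledP pi_fibre2)[o_low o_high] o'E.
have {}o'E j' : o' j' = h (o (cast_ord card_transport j')) by apply: o'E.
split.
  rewrite inE; apply/injectiveP => i j; rewrite !o'E.
  by move/h_inj/(bij_inj (ordering_bij o_ord))/cast_ord_inj.
apply/(doubledP pi'_fibre2); split=> [i iN|i].
  by rewrite o'E imset_f // o_low //= -card_base_transport.
rewrite !o'E sigma_transport -o_high; congr (h (o _)); apply: val_inj => /=.
rewrite (val_half_turn (card_Z pi'_fibre2)) (val_half_turn (card_Z pi_fibre2)).
by rewrite card_base_transport.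
Qed.

Lemma delta_transport w (d' : {set {ffun 'I_#|Z'| -> Z'}}) :
  w \in Csec pi -> d' \in Delta Z' ->
  (forall o, o \in delta pi w -> exists2 o', o' \in d' &
     forall (j : 'I_#|Z|) (j' : 'I_#|Z'|), val j = val j' -> o' j' = h (o j)) ->
  delta pi' (h @: w) = d'.
Proof.
move=> w_sec d'_Delta transport.
have [o o_ord o_dbl] := doubled_exists pi_fibre2 w_sec.
have := orbitA_refl o; rewrite -(delta_doubled pi_fibre2 w_sec o_ord o_dbl).
case/transport => o' o'_d' o'E; have [o'_ord o'_dbl] := doubled_transport o_ord o_dbl o'E.
rewrite (delta_doubled pi'_fibre2 (Csec_transport w_sec) o'_ord o'_dbl).
by rewrite (Delta_orbitA d'_Delta o'_d').
Qed.

End Transport.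

Lemma covering_fibre2 (T : topologicalType) (G : profinite_group T) (X Y : finType)
    (actX : T -> X -> X) (actY : T -> Y -> Y) (p : X -> Y) :
  covering_on G actX [set: X] actY [set: Y] p -> forall y, #|[set x | p x == y]| = 2.
Proof.
case=> _ _ _ _ fibre2 y; rewrite -(fibre2 y (in_setT y)).
by apply: eq_card => x; rewrite !inE.
Qed.

Lemma ord2P (i : 'I_2) : i = ord0 \/ i = lift ord0 ord0.
Proof. by case: i => -[|[|//]] ?; [left | right]; apply: val_inj. Qed.

Section Orientation.
Variables (T : Type) (X : finType) (act : T -> X -> X).
Variable d : 'I_2 -> {set {ffun 'I_#|X| -> X}}.
Hypothesis d_ori : orientation act d.

Lemma orientation_in_Delta i : d i \in Delta X.
Proof. by case: d_ori => _ <- _; rewrite imset_f. Qed.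

Lemma orientation_Delta : Delta X \subset [set d ord0; d (lift ord0 ord0)].
Proof.
case: d_ori => _ <- _; apply/subsetP => _ /imsetP[i _ ->].
by case: (ord2P i) => ->; rewrite !inE eqxx ?orbT.
Qed.

Lemma orientation_neq : d ord0 != d (lift ord0 ord0).
Proof. by case: d_ori => d_inj _ _; apply/eqP => /d_inj. Qed.

End Orientation.

Lemma inCi (Z Z0 : finType) (pi : Z -> Z0) d (i : 'I_2) w :
  (w \in Ci pi d i) = (w \in Csec pi) && (delta pi w == d i).
Proof. by rewrite [LHS]inE. Qed.

Section OrientedCovering.
Variables (T : topologicalType) (G : profinite_group T).
Variables (Z Z0 : finType) (actZ : T -> Z -> Z) (actZ0 : T -> Z0 -> Z0).
Variables (pi : Z -> Z0) (dZ : 'I_2 -> {set {ffun 'I_#|Z| -> Z}}).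
Hypotheses (cov : covering_on G actZ [set: Z] actZ0 [set: Z0] pi)
           (ori : orientation actZ dZ).

Local Notation C := (Ci pi dZ).
Local Notation i1 := (lift ord0 ord0).
Let pi_fibre2 := covering_fibre2 cov.
Let actZ_ga : gaction_on G actZ [set: Z] := let: And5 ga _ _ _ _ := cov in ga.

Lemma Csec_Ci w : w \in Csec pi -> delta pi w = dZ ord0 \/ delta pi w = dZ i1.
Proof.
move=> w_sec; have := subsetP (orientation_Delta ori) _ (delta_in_Delta pi_fibre2 w_sec).
by case/set2P; [left | right].
Qed.

Lemma Ci_partition : Csec pi = C ord0 :|: C i1 /\ [disjoint C ord0 & C i1].
Proof.
split.
  apply/setP => w; rewrite in_setU !inCi; case: (boolP (w \in Csec pi)) => //= w_sec.
  by case: (Csec_Ci w_sec) => ->; rewrite eqxx ?orbT.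
rewrite -setI_eq0; apply/eqP/setP => w; rewrite in_setI in_set0 !inCi.
apply/negP => /andP[/andP[_ /eqP ->] /andP[_ /eqP]].
by apply/eqP; exact: orientation_neq ori.
Qed.

Lemma Ci_same_class w w' : w \in Csec pi -> w' \in Csec pi ->
  (w \in C ord0) && (w' \in C ord0) || (w \in C i1) && (w' \in C i1)
  = (delta pi w == delta pi w').
Proof.
move=> w_sec w'_sec; rewrite !inCi w_sec w'_sec /=.
have d01 := orientation_neq ori.
by case: (Csec_Ci w_sec) => ->; case: (Csec_Ci w'_sec) => ->;
   rewrite ?eqxx ?orbF //= ?(negbTE d01) // eq_sym (negbTE d01).
Qed.

Lemma actZ_bij g : bijective (actZ g).
Proof. by apply: injF_bij => x y; apply: (gaction_inj (g := g) actZ_ga); rewrite inE. Qed.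

Lemma Ci_act i g w : w \in C i -> act_set actZ g w \in C i.
Proof.
rewrite !inCi => /andP[w_sec /eqP w_d].
have [_ _ _ piE _] := cov; have {}piE z : pi (actZ g z) = actZ0 g (pi z) by rewrite piE.
rewrite /act_set (Csec_transport pi_fibre2 pi_fibre2 (actZ_bij g) piE w_sec) /=.
rewrite (delta_transport pi_fibre2 pi_fibre2 (actZ_bij g) piE w_sec
           (orientation_in_Delta ori i)) //.
move=> o; rewrite w_d => o_d; exists (act_ord actZ g o).
  by case: ori => _ _ /(_ g i) <-; apply: imset_f.
by move=> j j' /val_inj ->; rewrite ffunE.
Qed.

Lemma Ci_setC i w : ~~ odd #|Z0| -> w \in C i -> ~: w \in C i.
Proof.
move=> Z0_even; rewrite !inCi => /andP[w_sec /eqP <-].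
have wC_sec := Csec_setC pi_fibre2 w_sec; rewrite wC_sec eq_sym.
rewrite (delta_eq_parity pi_fibre2 (orientation_Delta ori)) //.
by rewrite setDE setCK setIid (card_Csec_elem pi_fibre2).
Qed.

Lemma act_set_pair g w :
  act_set (act_set actZ) g [set w; ~: w] = [set act_set actZ g w; ~: act_set actZ g w].
Proof. by rewrite /act_set imsetU1 imset_set1 (imsetC_bij _ (actZ_bij g)). Qed.

Lemma Ci_covering i (z0 : Z) : ~~ odd #|Z0| ->
  covering_on G (act_set actZ) (C i) (act_set (act_set actZ)) (Qi pi dZ i)
    (fun w => [set w; ~: w]).
Proof.
move=> Z0_even.
have actC_ga : gaction_on G (act_set actZ) [set: {set Z}].
  by apply: gaction_act_set actZ_ga _ => *; rewrite inE.
split=> [||w wC|g w _|_ /imsetP[w wC ->]].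
- exact: (gaction_act_set actZ_ga (@Ci_act i)).
- apply: gaction_act_set actC_ga _ => g _ /imsetP[w wC ->].
  by rewrite act_set_pair; apply: imset_f; apply: Ci_act.
- exact: imset_f.
- by rewrite act_set_pair.
suff -> : [set x in C i | [set x; ~: x] == [set w; ~: w]] = [set w; ~: w].
  by rewrite cards2 eq_sym setC_neq.
apply/setP => x.
rewrite inE; apply/andP/idP => [[_ /eqP <-]|xw]; first by rewrite !inE eqxx.
split; first by case/set2P: xw => ->; [|apply: Ci_setC].
by rewrite (involution_pair_eq setCK xw).
Qed.

Lemma card_Ci i (y0 : Z0) : 2 * #|C i| = 2 ^ #|Z0|.
Proof.
have Delta2 := orientation_Delta ori; have d01 := orientation_neq ori.
rewrite /Ci; case: (ord2P i) => ->.
  exact: (card_delta_class pi_fibre2 y0 d01 Delta2).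
by apply: (card_delta_class pi_fibre2 y0 (d1 := dZ ord0)); rewrite 1?eq_sym // setUC.
Qed.

Lemma card_Qi i : 2 <= #|Z0| -> ~~ odd #|Z0| -> #|Qi pi dZ i| = 2 ^ (#|Z0| - 2).
Proof.
move=> Z0_ge2 Z0_even.
have /card_gt0P[y0 _] : 0 < #|Z0| by apply: leq_trans Z0_ge2.
have [z0 _] := pi_surj pi_fibre2 y0.
have := card_Ci i y0.
rewrite (card_involution_pairs setCK (setC_neq z0) (@Ci_setC i ^~ Z0_even)).
rewrite mulnA -{1}(subnK Z0_ge2) expnD [RHS]mulnC => /eqP.
by rewrite eqn_pmul2l // => /eqP.
Qed.

Section Isomorphism.
Variables (Z' Z0' : finType) (actZ' : T -> Z' -> Z') (actZ0' : T -> Z0' -> Z0').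
Variables (pi' : Z' -> Z0') (dZ' : 'I_2 -> {set {ffun 'I_#|Z'| -> Z'}}).
Variables (f : Z -> Z') (f0 : Z0 -> Z0').
Hypotheses (cov' : covering_on G actZ' [set: Z'] actZ0' [set: Z0'] pi')
           (ori' : orientation actZ' dZ')
           (iso : oriented_iso actZ actZ0 pi dZ actZ' actZ0' pi' dZ' f f0).

Let pi'_fibre2 := covering_fibre2 cov'.

Lemma Ci_iso i w : w \in C i -> f @: w \in Ci pi' dZ' i.
Proof.
case: iso => f_bij _ f_pi _ f_d; rewrite !inCi => /andP[w_sec /eqP w_d].
rewrite (Csec_transport pi_fibre2 pi'_fibre2 f_bij f_pi w_sec) /=.
have := delta_transport pi_fibre2 pi'_fibre2 f_bij f_pi w_sec
          (orientation_in_Delta ori' i).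
by rewrite w_d => /(_ (f_d i)) ->.
Qed.

Lemma Ci_iso_onto i w' : w' \in Ci pi' dZ' i -> exists2 w, w \in C i & f @: w = w'.
Proof.
case: iso => f_bij [f0_inv f0K _] f_pi _ _; have [f_inv fK f_invK] := f_bij.
rewrite inCi => /andP[w'_sec /eqP w'_d].
have f_inv_pi z' : pi (f_inv z') = f0_inv (pi' z') by rewrite -{2}(f_invK z') f_pi f0K.
have w_sec := Csec_transport pi'_fibre2 pi_fibre2 (Bijective f_invK fK) f_inv_pi w'_sec.
have f_inv_w' : f @: (f_inv @: w') = w'.
  by rewrite -imset_comp -[RHS]imset_id; apply: eq_imset => z' /=; rewrite f_invK.
exists (f_inv @: w') => //.
have [j w_j] : exists j, f_inv @: w' \in C j.
  by case: (Csec_Ci w_sec) => w_d; [exists ord0 | exists i1]; rewrite inCi w_sec w_d eqxx.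
have := Ci_iso w_j; rewrite f_inv_w' [_ \in Ci pi' _ _]inCi w'_d => /andP[_ /eqP].
by case: ori' => dZ'_inj _ _ /dZ'_inj ->.
Qed.

End Isomorphism.

End OrientedCovering.

Theorem proposition2p2 (T : topologicalType) (G : profinite_group T) (n : nat)
  (Z Z0 : finType) (actZ : T -> Z -> Z) (actZ0 : T -> Z0 -> Z0) (pi : Z -> Z0)
  (dZ : 'I_2 -> {set {ffun 'I_#|Z| -> Z}}) :
  (2 <= n)%N -> ~~ odd n ->
  covering_on G actZ [set: Z] actZ0 [set: Z0] pi -> #|Z0| = n ->
  orientation actZ dZ ->
  [/\ Csec pi = Ci pi dZ ord0 :|: Ci pi dZ (lift ord0 ord0)
        /\ [disjoint Ci pi dZ ord0 & Ci pi dZ (lift ord0 ord0)],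
      (forall i : 'I_2,
        [/\ forall g w, w \in Ci pi dZ i -> act_set actZ g w \in Ci pi dZ i,
            forall w, w \in Ci pi dZ i -> (~: w \in Ci pi dZ i) /\ ~: w != w,
            covering_on G (act_set actZ) (Ci pi dZ i)
              (act_set (act_set actZ)) (Qi pi dZ i) (fun w => [set w; ~: w]) &
            #|Qi pi dZ i| = 2 ^ (n - 2)]),
      (forall (Z' Z0' : finType) (actZ' : T -> Z' -> Z') (actZ0' : T -> Z0' -> Z0')
              (pi' : Z' -> Z0') (dZ' : 'I_2 -> {set {ffun 'I_#|Z'| -> Z'}})
              (f : Z -> Z') (f0 : Z0 -> Z0'),
         covering_on G actZ' [set: Z'] actZ0' [set: Z0'] pi' ->
         orientation actZ' dZ' ->
         oriented_iso actZ actZ0 pi dZ actZ' actZ0' pi' dZ' f f0 ->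
         forall i : 'I_2,
         [/\ forall w, w \in Ci pi dZ i -> f @: w \in Ci pi' dZ' i,
             {in Ci pi dZ i &, injective (fun w : {set Z} => f @: w)},
             forall w', w' \in Ci pi' dZ' i -> exists2 w, w \in Ci pi dZ i & f @: w = w',
             forall g w, w \in Ci pi dZ i ->
               f @: act_set actZ g w = act_set actZ' g (f @: w) &
             forall w, f @: (~: w) = ~: (f @: w)]) &
      forall w w', w \in Csec pi -> w' \in Csec pi ->
        ((w \in Ci pi dZ ord0) && (w' \in Ci pi dZ ord0))
        || ((w \in Ci pi dZ (lift ord0 ord0)) && (w' \in Ci pi dZ (lift ord0 ord0)))
        = ~~ odd #|w :&: w'|].
Proof.
move=> n_ge2 n_even cov card_Z0 ori; subst n.
have pi_fibre2 := covering_fibre2 cov.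
have /card_gt0P[y0 _] : 0 < #|Z0| by apply: leq_trans n_ge2.
have [z0 _] := pi_surj pi_fibre2 y0.
split=> [|i|Z' Z0' actZ' actZ0' pi' dZ' f f0 cov' ori' iso i|w w' w_sec w'_sec].
- exact: Ci_partition cov ori.
- split=> [g w|w wC||]; first exact: Ci_act cov ori i g w.
  + by split; [exact: Ci_setC cov ori i w n_even wC | exact: setC_neq z0 w].
  + exact: Ci_covering cov ori i z0 n_even.
  + exact: card_Qi cov ori i n_ge2 n_even.
- have [f_bij _ _ [f_act _] _] := iso.
  split=> [w|w1 w2 _ _|w'|g w _|w].
  + by move=> wC; exact (Ci_iso cov cov' ori' iso wC).
  + exact/imset_inj/bij_inj.
  + by move=> w'C; exact (Ci_iso_onto cov ori cov' ori' iso w'C).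
  + by rewrite /act_set -!imset_comp; apply: eq_imset => z /=; rewrite f_act.
  + exact: imsetC_bij.
rewrite (Ci_same_class cov ori) // (delta_eq_parity pi_fibre2 (orientation_Delta ori)) //.
by rewrite odd_setD_setI // (card_Csec_elem pi_fibre2).
Qed.
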